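(* Let $\alpha\in(0,1)$ be irrational with regular continued fraction $\alpha=\cfrac{1}{a_1+\cfrac{1}{a_2+\cdots}}$ (partial quotients $a_j\in\mathbb{Z}^+$). Then the sequence $(a_j)_{j\ge1}$ is bounded if and only if there is $\delta>0$ with $|\alpha_{k,1}|\ge\delta$ for all $k\ge1$, where $\alpha_{k,1}$ comes from the Minkowski chain of $\alpha$ (case $n=1$).
   Context: Minkowski chain (case $n=1$, $\ell=2$): for $r=(r_1,r_2)\in\mathbb{Z}^2$ put $\xi(r)=r_1\alpha+r_2$. For $m\in\mathbb{Z}^+$, $A_m$ is the nonsingular integral $2\times2$ matrix with rows $w_1,w_2$ chosen successively: $w_1$ is the nonzero $w\in\mathbb{Z}^2$ with $\max(|w_1|,|w_2|)\le m$ minimizing $|\xi(w)|$, and $w_2$ is the $w$ with $\max$-norm $\le m$, linearly independent of $w_1$, minimizing $|\xi(w)|$; each normalized so that its first nonzero entry is positive. The Minkowski chain $B_1,B_2,\dots$ is the sequence of distinct matrices among $A_1,A_2,\dots$ in order of appearance. For $B_k$ let $(\beta_1,\beta_2)^\top=B_k(\alpha,1)^\top$ and $\alpha_{k,1}=\beta_1/\beta_2$. *)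

From Stdlib Require Import Reals ZArith Arith ClassicalEpsilon.
Open Scope R_scope.

Definition irrational (a : R) : Prop :=
  forall p q : Z, q <> 0%Z -> a <> IZR p / IZR q.

(* Regular continued fraction of a in (0,1): x_0 = a, x_{j} = 1/x_{j-1} - a_j,
   a_j = floor (1/x_{j-1}) for j >= 1.  (Int_part = floor.) *)
Fixpoint cf_rem (a : R) (j : nat) : R :=
  match j with
  | O => a
  | S j' => / cf_rem a j' - IZR (Int_part (/ cf_rem a j'))
  end.

(* partial quotient a_j, meaningful for j >= 1 *)
Definition cf_pq (a : R) (j : nat) : Z := Int_part (/ cf_rem a (pred j)).

Definition vec := (Z * Z)%type.
Definition xi (a : R) (r : vec) : R := IZR (fst r) * a + IZR (snd r).

Definition inbox (m : nat) (r : vec) : Prop :=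
  (Z.abs (fst r) <= Z.of_nat m)%Z /\ (Z.abs (snd r) <= Z.of_nat m)%Z.

Definition normalized (r : vec) : Prop :=
  (0 < fst r)%Z \/ (fst r = 0%Z /\ (0 < snd r)%Z).

Definition det2 (u v : vec) : Z := (fst u * snd v - snd u * fst v)%Z.

(* a 2x2 integral matrix, given by its rows (w1, w2) *)
Definition mat := (vec * vec)%type.

Definition IsA (a : R) (m : nat) (A : mat) : Prop :=
  let w1 := fst A in let w2 := snd A in
  (normalized w1 /\ inbox m w1 /\
   forall w : vec, w <> (0%Z, 0%Z) -> inbox m w -> Rabs (xi a w1) <= Rabs (xi a w))
  /\
  (normalized w2 /\ inbox m w2 /\ det2 w1 w2 <> 0%Z /\
   forall w : vec, det2 w1 w <> 0%Z -> inbox m w -> Rabs (xi a w2) <= Rabs (xi a w)).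

(* A_m as a function (the defining property determines it uniquely for
   irrational alpha and m >= 1) *)
Definition Amat (a : R) (m : nat) : mat :=
  epsilon (inhabits ((0%Z, 0%Z), (0%Z, 0%Z))) (IsA a m).

Definition Appeared (a : R) (j : nat) : Prop :=
  exists i, (1 <= i < j)%nat /\ Amat a i = Amat a j.

(* ChainIdx a k m : the k-th matrix B_k of the Minkowski chain is A_m,
   with m the index of its first appearance. *)
Inductive ChainIdx (a : R) : nat -> nat -> Prop :=
| ChainIdx1 : ChainIdx a 1 1
| ChainIdxS : forall k m m', ChainIdx a k m -> (m < m')%nat -> ~ Appeared a m' ->
    (forall j, (m < j < m')%nat -> Appeared a j) -> ChainIdx a (S k) m'.

(* alpha_{k,1} = beta_1 / beta_2 where (beta_1, beta_2)^T = B (alpha, 1)^T *)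
Definition alpha_1 (a : R) (B : mat) : R := xi a (fst B) / xi a (snd B).

(* The proof compares the Minkowski matrices A_m with the convergents p_i/q_i
   of alpha and their errors t_i = |q_i alpha - p_i| = x_0 ... x_{i-1}
   (products of the continued fraction remainders).  Next come the classical continued fraction facts:
   t_i = a_{i+1} t_{i+1} + t_{i+2}, q_{i+1} t_i + q_i t_{i+1} = 1, the
   convergent vectors (q_i, -p_i), (q_{i+1}, -p_{i+1}) form a unimodular
   basis of Z^2, and best approximation: |r_1 alpha + r_2| >= t_i whenever
   0 < |r_1| < q_{i+1}.
   If q_k <= m < q_{k+1} and A_m has rows w_1, w_2, best approximation gives
   |xi(w_1)| >= t_k, and one of the convergent vectors of index k-1, k is
   independent of w_1, so |xi(w_2)| <= t_{k-1} <= (a_k + 1) t_k; hence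
   |alpha_{k,1}| >= 1/(M+1) when all a_j <= M.  Conversely, for m = q_{i+1}
   we have |xi(w_1)| <= t_{i+1}, while det(w_1, w_2) <> 0 forces
   1 <= 2 m |xi(w_2)|; together with a_{i+1} q_{i+1} t_{i+1} <= 1 this
   gives a_{i+1} <= 2 / delta. *)

From Stdlib Require Import Reals ZArith Lra Lia Psatz List Classical ClassicalEpsilon.
Open Scope R_scope.

Lemma xi_nonzero (a : R) (w : vec) : irrational a -> w <> (0%Z, 0%Z) -> xi a w <> 0.
Proof.
  destruct w as [r1 r2]. unfold xi; cbn [fst snd]. intros Hirr Hw E.
  destruct (Z.eq_dec r1 0) as [->|Hr1].
  - apply Hw. f_equal. apply eq_IZR. lra.
  - apply (Hirr (- r2)%Z r1 Hr1). rewrite opp_IZR.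
    apply not_0_IZR in Hr1. field_simplify_eq; [lra|exact Hr1].
Qed.

Lemma cramer_fst (u v w : vec) :
  (det2 u v * fst w = det2 w v * fst u + det2 u w * fst v)%Z.
Proof. unfold det2. ring. Qed.

Lemma cramer_snd (u v w : vec) :
  (det2 u v * snd w = det2 w v * snd u + det2 u w * snd v)%Z.
Proof. unfold det2. ring. Qed.

Lemma cramer_xi (a : R) (u v w : vec) :
  IZR (det2 u v) * xi a w = IZR (det2 w v) * xi a u + IZR (det2 u w) * xi a v.
Proof. unfold det2, xi. rewrite !minus_IZR, !mult_IZR. ring. Qed.

Lemma det2_xi (a : R) (u v : vec) :
  IZR (det2 u v) = IZR (fst u) * xi a v - IZR (fst v) * xi a u.
Proof. unfold det2, xi. rewrite minus_IZR, !mult_IZR. ring. Qed.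

Lemma independent_of_basis (u v w : vec) : det2 u v <> 0%Z -> w <> (0%Z, 0%Z) ->
  det2 w u <> 0%Z \/ det2 w v <> 0%Z.
Proof.
  intros Huv Hw. destruct (Z.eq_dec (det2 w u) 0) as [Hu|Hu]; [right|left; exact Hu].
  intro Hv. apply Hw.
  assert (Hu' : det2 u w = 0%Z) by (unfold det2 in *; lia).
  pose proof (cramer_fst u v w) as Hfst. pose proof (cramer_snd u v w) as Hsnd.
  rewrite Hv, Hu' in Hfst, Hsnd. simpl in Hfst, Hsnd.
  destruct w as [w1 w2]; cbn [fst snd] in *. f_equal; nia.
Qed.

Lemma list_argmin {A : Type} (f : A -> R) (Pr : A -> Prop) (L : list A) :
  (exists x, In x L /\ Pr x) ->
  exists x, In x L /\ Pr x /\ forall y, In y L -> Pr y -> f x <= f y.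
Proof.
  induction L as [|b L IH]; intros [x [Hx Px]]; [destruct Hx|].
  destruct (classic (exists x, In x L /\ Pr x)) as [Ex|NEx].
  - destruct (IH Ex) as [z [Hz [Pz Hmin]]].
    destruct (classic (Pr b /\ f b <= f z)) as [[Pb Hb]|Nb].
    + exists b. split; [left; auto|split; auto].
      intros y [<-|Hy] Py; [lra|]. specialize (Hmin y Hy Py). lra.
    + exists z. split; [right; auto|split; auto].
      intros y [<-|Hy] Py; [|auto].
      destruct (Rle_dec (f z) (f b)) as [L1|L1]; [exact L1|].
      exfalso. apply Nb. split; [exact Py|lra].
  - destruct Hx as [<-|Hx]; [|exfalso; apply NEx; eauto].
    exists b. split; [left; auto|split; auto].
    intros y [<-|Hy] Py; [lra|]. exfalso; apply NEx; eauto.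
Qed.

Definition box_list (m : nat) : list vec :=
  let coords := map (fun n => (Z.of_nat n - Z.of_nat m)%Z) (seq 0 (2 * m + 1)) in
  list_prod coords coords.

Lemma in_box_list m w : inbox m w -> In w (box_list m).
Proof.
  assert (Hc : forall z, (Z.abs z <= Z.of_nat m)%Z ->
            In z (map (fun n => (Z.of_nat n - Z.of_nat m)%Z) (seq 0 (2 * m + 1)))).
  { intros z Hz. apply in_map_iff. exists (Z.to_nat (z + Z.of_nat m)).
    split; [lia|]. apply in_seq. lia. }
  destruct w as [x y]. intros [Hx Hy]. apply in_prod_iff. split; apply Hc; auto.
Qed.

Definition negv (w : vec) : vec := ((- fst w)%Z, (- snd w)%Z).

Lemma xi_negv a w : Rabs (xi a (negv w)) = Rabs (xi a w).
Proof.
  unfold xi, negv; cbn [fst snd]. rewrite !opp_IZR, <- Rabs_Ropp. f_equal. ring.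
Qed.

Lemma box_argmin_normalized a m (Pr : vec -> Prop) (w0 : vec) :
  inbox m w0 -> Pr w0 -> (forall w, Pr w -> w <> (0%Z, 0%Z)) ->
  (forall w, Pr w -> Pr (negv w)) ->
  exists w, normalized w /\ inbox m w /\ Pr w /\
    forall y, Pr y -> inbox m y -> Rabs (xi a w) <= Rabs (xi a y).
Proof.
  intros Hb0 P0 Pnz Pneg.
  destruct (list_argmin (fun w => Rabs (xi a w)) (fun w => inbox m w /\ Pr w) (box_list m))
    as [u [_ [[Hu Pu] Hmin_list]]]; [exists w0; split; [apply in_box_list|]; auto|].
  assert (Hmin : forall y, Pr y -> inbox m y -> Rabs (xi a u) <= Rabs (xi a y))
    by (intros y Py Hy; apply Hmin_list; [apply in_box_list|]; auto).
  destruct u as [x y]. pose proof (Pnz _ Pu) as Hnz.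
  destruct (classic (normalized (x, y))) as [N|N].
  - exists (x, y). auto.
  - exists (negv (x, y)). split; [|split; [|split; [exact (Pneg _ Pu)|]]].
    + assert (x <> 0%Z \/ y <> 0%Z)
        by (destruct (Z.eq_dec x 0), (Z.eq_dec y 0); subst; auto).
      unfold normalized, negv in *; cbn [fst snd] in *. lia.
    + unfold inbox, negv in *; cbn [fst snd] in *. lia.
    + intros w Pw Hw. rewrite xi_negv. auto.
Qed.

Lemma independent_unit_vector m (w : vec) : (1 <= m)%nat -> w <> (0%Z, 0%Z) ->
  exists v, inbox m v /\ det2 w v <> 0%Z.
Proof.
  intros Hm Hw. destruct w as [x y]. unfold inbox, det2; cbn [fst snd].
  destruct (Z.eq_dec x 0) as [->|Hx].
  - exists (1%Z, 0%Z); cbn [fst snd].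
    assert (y <> 0%Z) by (intro; subst; auto). lia.
  - exists (0%Z, 1%Z); cbn [fst snd]. lia.
Qed.

Lemma minkowski_matrix_exists a m : (1 <= m)%nat -> exists A, IsA a m A.
Proof.
  intros Hm.
  destruct (box_argmin_normalized a m (fun w => w <> (0%Z, 0%Z)) (1%Z, 0%Z))
    as [w1 [N1 [B1 [Nz1 M1]]]].
  { unfold inbox; simpl; lia. } { discriminate. } { auto. }
  { intros [x y] H E. unfold negv in E; simpl in E. injection E; intros. apply H. f_equal; lia. }
  destruct (independent_unit_vector m w1 Hm Nz1) as [w0 [Hb0 Hd0]].
  destruct (box_argmin_normalized a m (fun w => det2 w1 w <> 0%Z) _ Hb0 Hd0)
    as [w2 [N2 [B2 [D2 M2]]]].
  { intros w Hd E. subst w. apply Hd. unfold det2; simpl. ring. }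
  { intros w Hd. unfold det2, negv in *; simpl. lia. }
  exists (w1, w2). unfold IsA; cbn [fst snd]. auto 10.
Qed.

Lemma Amat_spec a m : (1 <= m)%nat -> IsA a m (Amat a m).
Proof. intros Hm. unfold Amat. apply epsilon_spec. apply minkowski_matrix_exists; auto. Qed.

Lemma chain_index_ge1 a k m : ChainIdx a k m -> (1 <= m)%nat /\ (1 <= k)%nat.
Proof. induction 1; lia. Qed.

Lemma first_appearance a n : forall m, (m <= n)%nat -> (1 <= m)%nat ->
  exists m', (1 <= m' <= m)%nat /\ ~ Appeared a m' /\ Amat a m' = Amat a m.
Proof.
  induction n as [|n IH]; intros m Hmn Hm; [lia|].
  destruct (classic (Appeared a m)) as [[i [Hi E]]|NA].
  - destruct (IH i ltac:(lia) ltac:(lia)) as [m' [H1 [H2 H3]]].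
    exists m'. split; [lia|]. split; [exact H2|congruence].
  - exists m. auto.
Qed.

Lemma last_new_index a d : (1 <= d)%nat -> exists m0, (1 <= m0 <= d)%nat /\
  ~ Appeared a m0 /\ forall j, (m0 < j <= d)%nat -> Appeared a j.
Proof.
  induction d as [|d IH]; intros Hd; [lia|].
  destruct (classic (Appeared a (S d))) as [A|NA].
  - destruct d as [|d]; [destruct A as [i [Hi _]]; lia|].
    destruct (IH ltac:(lia)) as [m0 [H1 [H2 H3]]].
    exists m0. split; [lia|split; [exact H2|]]. intros j Hj.
    destruct (Nat.eq_dec j (S (S d))) as [->|Hne]; [exact A|apply H3; lia].
  - exists (S d). split; [lia|split; [exact NA|lia]].
Qed.

Lemma new_index_in_chain a n : forall m, (m <= n)%nat -> (1 <= m)%nat -> ~ Appeared a m ->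
  exists k, ChainIdx a k m.
Proof.
  induction n as [|n IH]; intros m Hmn Hm NA; [lia|].
  destruct (Nat.eq_dec m 1) as [->|E]; [exists 1%nat; constructor|].
  destruct (last_new_index a (m - 1) ltac:(lia)) as [m0 [H1 [H2 H3]]].
  destruct (IH m0 ltac:(lia) ltac:(lia) H2) as [k Hk].
  exists (S k). apply (ChainIdxS a k m0 m Hk); [lia|exact NA|].
  intros j Hj. apply H3. lia.
Qed.

Lemma chain_covers a m : (1 <= m)%nat ->
  exists k m', (1 <= k)%nat /\ ChainIdx a k m' /\ Amat a m' = Amat a m.
Proof.
  intros Hm. destruct (first_appearance a m m (le_n _) Hm) as [m' [H1 [H2 H3]]].
  destruct (new_index_in_chain a m' m' (le_n _) ltac:(lia) H2) as [k Hk].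
  exists k, m'. split; [apply (chain_index_ge1 _ _ _ Hk)|auto].
Qed.

Lemma normalized_nonzero (w : vec) : normalized w -> w <> (0%Z, 0%Z).
Proof. unfold normalized. intros H E. subst w. simpl in H. lia. Qed.

Lemma minkowski_rows a m (w1 w2 : vec) : IsA a m (w1, w2) ->
  w1 <> (0%Z, 0%Z) /\ w2 <> (0%Z, 0%Z) /\ Rabs (xi a w1) <= Rabs (xi a w2).
Proof.
  unfold IsA; cbn [fst snd]. intros [[N1 [_ M1]] [N2 [B2 _]]].
  pose proof (normalized_nonzero _ N2). split; [apply normalized_nonzero; auto|auto].
Qed.

Lemma alpha_1_ge_iff a (w1 w2 : vec) (c : R) : xi a w2 <> 0 ->
  (c <= Rabs (alpha_1 a (w1, w2)) <-> c * Rabs (xi a w2) <= Rabs (xi a w1)).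
Proof.
  intros Hw2. pose proof (Rabs_pos_lt _ Hw2) as Hpos.
  unfold alpha_1; cbn [fst snd]. unfold Rdiv. rewrite Rabs_mult, Rabs_inv.
  split; intros H.
  - apply (Rmult_le_compat_r (Rabs (xi a w2))) in H; [|lra].
    rewrite Rmult_assoc, Rinv_l in H; lra.
  - apply (Rmult_le_reg_r (Rabs (xi a w2))); [exact Hpos|].
    rewrite Rmult_assoc, Rinv_l; lra.
Qed.

Lemma det_lower_bound a m (w1 w2 : vec) : det2 w1 w2 <> 0%Z -> inbox m w1 -> inbox m w2 ->
  Rabs (xi a w1) <= Rabs (xi a w2) -> 1 <= 2 * INR m * Rabs (xi a w2).
Proof.
  intros Hdet [B1 _] [B2 _] Hle.
  assert (Hnorm : forall z, (Z.abs z <= Z.of_nat m)%Z -> Rabs (IZR z) <= INR m).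
  { intros z Hz. rewrite <- abs_IZR, INR_IZR_INZ. apply IZR_le. exact Hz. }
  assert (H1 : 1 <= Rabs (IZR (det2 w1 w2))) by (rewrite <- abs_IZR; apply IZR_le; lia).
  rewrite (det2_xi a) in H1.
  pose proof (Rabs_triang (IZR (fst w1) * xi a w2) (- (IZR (fst w2) * xi a w1))) as Htri.
  rewrite Rabs_Ropp, !Rabs_mult in Htri.
  pose proof (Hnorm _ B1). pose proof (Hnorm _ B2).
  pose proof (Rabs_pos (xi a w1)). pose proof (Rabs_pos (xi a w2)).
  pose proof (Rabs_pos (IZR (fst w1))). pose proof (Rabs_pos (IZR (fst w2))).
  unfold Rminus in H1. nra.
Qed.

(* Subtracting an integer from the inverse preserves irrationality; this is
   what keeps every continued fraction remainder irrational. *)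
Lemma irrational_shift_inv (x : R) (n : Z) : irrational x -> irrational (/ x - IZR n).
Proof.
  intros Hx p q Hq Heq.
  assert (Hx0 : x <> 0).
  { intro E. apply (Hx 0%Z 1%Z); [lia|]. rewrite E. unfold Rdiv. simpl. ring. }
  assert (Hinv : / x = IZR (p + n * q) / IZR q).
  { rewrite plus_IZR, mult_IZR. apply (Rplus_eq_reg_r (- IZR n)).
    replace (/ x + - IZR n) with (/ x - IZR n) by ring. rewrite Heq.
    field. apply not_0_IZR; auto. }
  destruct (Z.eq_dec (p + n * q) 0) as [E|E].
  - rewrite E in Hinv. unfold Rdiv in Hinv. rewrite Rmult_0_l in Hinv.
    exact (Rinv_neq_0_compat x Hx0 Hinv).
  - apply (Hx q (p + n * q)%Z E).
    rewrite <- (Rinv_inv x), Hinv. field. split; apply not_0_IZR; auto.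
Qed.

Fixpoint cf_den (a : R) (i : nat) : Z :=
  match i with
  | O => 0%Z
  | S O => 1%Z
  | S ((S i') as j) => (cf_pq a j * cf_den a j + cf_den a i')%Z
  end.

Fixpoint cf_num (a : R) (i : nat) : Z :=
  match i with
  | O => 1%Z
  | S O => 0%Z
  | S ((S i') as j) => (cf_pq a j * cf_num a j + cf_num a i')%Z
  end.

(* t_i = x_0 x_1 ... x_{i-1}, which turns out to be |q_i a - p_i|. *)
Fixpoint cf_err (a : R) (i : nat) : R :=
  match i with
  | O => 1
  | S i' => cf_err a i' * cf_rem a i'
  end.

(* The convergent vector (q_i, -p_i), so that xi a (conv a i) = q_i a - p_i. *)
Definition conv (a : R) (i : nat) : vec := (cf_den a i, (- cf_num a i)%Z).

Lemma cf_den_SS a i : cf_den a (S (S i)) = (cf_pq a (S i) * cf_den a (S i) + cf_den a i)%Z.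
Proof. reflexivity. Qed.

Lemma cf_num_SS a i : cf_num a (S (S i)) = (cf_pq a (S i) * cf_num a (S i) + cf_num a i)%Z.
Proof. reflexivity. Qed.

Lemma coords_opposite_signs (U V r1 e qi qs : Z) : (e = 1 \/ e = -1)%Z ->
  r1 <> 0%Z -> (0 <= qi)%Z -> (Z.abs r1 < qs)%Z -> (r1 * e = U * qi + V * qs)%Z ->
  (1 <= U /\ V <= 0 \/ U <= -1 /\ 0 <= V)%Z.
Proof.
  intros He Hr Hqi Hlt Heq.
  destruct (Z.lt_trichotomy U 0) as [HU|[HU|HU]];
  destruct (Z.lt_trichotomy V 0) as [HV|[HV|HV]]; try lia;
  destruct He; subst; nia.
Qed.

Lemma abs_combination_lower (U V x y : R) : x * y <= 0 ->
  (1 <= U /\ V <= 0 \/ U <= -1 /\ 0 <= V) -> Rabs x <= Rabs (U * x + V * y).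
Proof.
  intros Hxy HUV.
  unfold Rabs; destruct (Rcase_abs x); destruct (Rcase_abs (U * x + V * y));
    destruct HUV as [[HU HV]|[HU HV]]; nra.
Qed.

Section ContinuedFraction.

Variable a : R.
Hypotheses (Ha0 : 0 < a) (Ha1 : a < 1) (Hirr : irrational a).

Lemma cf_rem_props i : irrational (cf_rem a i) /\ 0 < cf_rem a i < 1.
Proof.
  induction i as [|i [IHirr [IH0 IH1]]]; [simpl; auto|].
  simpl. destruct (base_Int_part (/ cf_rem a i)) as [B1 B2].
  split; [apply irrational_shift_inv; auto|split; [|lra]].
  destruct (Rle_lt_or_eq_dec 0 (/ cf_rem a i - IZR (Int_part (/ cf_rem a i))))
    as [L|E]; [lra|lra|].
  exfalso. apply (irrational_shift_inv _ (Int_part (/ cf_rem a i)) IHirr 0%Z 1%Z); [lia|].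
  rewrite <- E. unfold Rdiv; simpl; ring.
Qed.

Lemma cf_pq_ge1 i : (1 <= cf_pq a (S i))%Z.
Proof.
  unfold cf_pq; simpl. destruct (cf_rem_props i) as [_ [X0 X1]].
  destruct (base_Int_part (/ cf_rem a i)) as [B1 B2].
  assert (1 < / cf_rem a i) by (rewrite <- Rinv_1; apply Rinv_lt_contravar; lra).
  assert (Hpos : IZR 0 < IZR (Int_part (/ cf_rem a i))) by (simpl; lra).
  apply lt_IZR in Hpos. lia.
Qed.

Lemma pq_bound_ge1 M : (forall j, (1 <= j)%nat -> (cf_pq a j <= M)%Z) -> 1 <= IZR M.
Proof.
  intros HM. apply IZR_le. pose proof (cf_pq_ge1 0). pose proof (HM 1%nat (le_n 1)). lia.
Qed.

Lemma cf_err_pos i : 0 < cf_err a i.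
Proof. induction i; simpl; [lra|]. destruct (cf_rem_props i) as [_ [X0 X1]]. nra. Qed.

Lemma cf_err_decr i : cf_err a (S i) < cf_err a i.
Proof. simpl. destruct (cf_rem_props i) as [_ [X0 X1]]. pose proof (cf_err_pos i). nra. Qed.

Lemma cf_err_le1 i : cf_err a i <= 1.
Proof. induction i; [simpl; lra|]. pose proof (cf_err_decr i). lra. Qed.

Lemma cf_err_rec i : cf_err a i = IZR (cf_pq a (S i)) * cf_err a (S i) + cf_err a (S (S i)).
Proof.
  unfold cf_pq; simpl. destruct (cf_rem_props i) as [_ [X0 X1]]. field. lra.
Qed.

Lemma cf_err_ratio M j : (cf_pq a (S j) <= M)%Z ->
  cf_err a j <= (IZR M + 1) * cf_err a (S j).
Proof.
  intros HM. apply IZR_le in HM. rewrite (cf_err_rec j).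
  pose proof (cf_err_decr (S j)). pose proof (cf_err_pos (S j)). nra.
Qed.

Lemma conv_xi_alternating i :
  (xi a (conv a i) = cf_err a i /\ xi a (conv a (S i)) = - cf_err a (S i)) \/
  (xi a (conv a i) = - cf_err a i /\ xi a (conv a (S i)) = cf_err a (S i)).
Proof.
  assert (Hrec : forall j, xi a (conv a (S (S j))) =
            IZR (cf_pq a (S j)) * xi a (conv a (S j)) + xi a (conv a j)).
  { intros j. unfold xi, conv; cbn [fst snd].
    rewrite cf_den_SS, cf_num_SS, !opp_IZR, !plus_IZR, !mult_IZR. ring. }
  induction i as [|i [[E1 E2]|[E1 E2]]].
  - right. unfold xi, conv; simpl. split; lra.
  - right. split; [exact E2|]. rewrite Hrec, E1, E2, (cf_err_rec i). lra.
  - left. split; [exact E2|]. rewrite Hrec, E1, E2, (cf_err_rec i). lra.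
Qed.

Lemma conv_xi_abs i : Rabs (xi a (conv a i)) = cf_err a i.
Proof.
  pose proof (cf_err_pos i).
  destruct (conv_xi_alternating i) as [[E _]|[E _]]; rewrite E;
    [|rewrite Rabs_Ropp]; apply Rabs_pos_eq; lra.
Qed.

Lemma conv_xi_opposite i : xi a (conv a i) * xi a (conv a (S i)) <= 0.
Proof.
  pose proof (cf_err_pos i). pose proof (cf_err_pos (S i)).
  destruct (conv_xi_alternating i) as [[E1 E2]|[E1 E2]]; rewrite E1, E2; nra.
Qed.

Lemma cf_den_ge1 i : (0 <= cf_den a i)%Z /\ (1 <= cf_den a (S i))%Z.
Proof.
  induction i as [|i [IH0 IH1]]; [simpl; lia|].
  rewrite cf_den_SS. pose proof (cf_pq_ge1 i). split; nia.
Qed.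

Lemma cf_den_mono i : (cf_den a i <= cf_den a (S i))%Z.
Proof.
  destruct i as [|i]; [simpl; lia|].
  rewrite cf_den_SS. pose proof (cf_pq_ge1 i). destruct (cf_den_ge1 i). nia.
Qed.

Lemma cf_den_unbounded i : (Z.of_nat i <= cf_den a (S i))%Z.
Proof.
  induction i as [|i IH]; [simpl; lia|].
  rewrite cf_den_SS. pose proof (cf_pq_ge1 i). destruct (cf_den_ge1 i) as [_ Q1].
  destruct i as [|i]; [simpl in *; lia|].
  destruct (cf_den_ge1 i) as [_ Q0]. nia.
Qed.

Lemma cf_den_bracket (m : Z) : (1 <= m)%Z ->
  exists k, (1 <= k)%nat /\ (cf_den a k <= m < cf_den a (S k))%Z.
Proof.
  intros Hm.
  assert (Hfind : forall n, (1 <= n)%nat -> (m < cf_den a n)%Z ->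
            exists k, (1 <= k)%nat /\ (cf_den a k <= m < cf_den a (S k))%Z).
  { induction n as [|n IH]; intros Hn Hlt; [lia|].
    destruct (Z_lt_le_dec m (cf_den a n)) as [L|L].
    - destruct n as [|n]; [simpl in L; lia|]. apply IH; [lia|exact L].
    - destruct n as [|n]; [simpl in *; lia|]. exists (S n). split; [lia|lia]. }
  apply (Hfind (S (S (Z.to_nat m)))); [lia|].
  pose proof (cf_den_unbounded (S (Z.to_nat m))). lia.
Qed.

Lemma conv_det i : det2 (conv a i) (conv a (S i)) = 1%Z \/ det2 (conv a i) (conv a (S i)) = (-1)%Z.
Proof.
  unfold det2, conv; cbn [fst snd].
  induction i as [|i IH]; [simpl; lia|].
  rewrite cf_den_SS, cf_num_SS.
  replace (cf_den a (S i) * - (cf_pq a (S i) * cf_num a (S i) + cf_num a i) -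
           - cf_num a (S i) * (cf_pq a (S i) * cf_den a (S i) + cf_den a i))%Z
    with (- (cf_den a i * - cf_num a (S i) - - cf_num a i * cf_den a (S i)))%Z by ring.
  lia.
Qed.

Lemma det_identity i : IZR (cf_den a (S i)) * cf_err a i + IZR (cf_den a i) * cf_err a (S i) = 1.
Proof.
  induction i as [|i IH]; [simpl; lra|].
  rewrite cf_den_SS, plus_IZR, mult_IZR. rewrite (cf_err_rec i) in IH. lra.
Qed.

Lemma pq_den_err_le1 i : IZR (cf_pq a (S i)) * IZR (cf_den a (S i)) * cf_err a (S i) <= 1.
Proof.
  pose proof (det_identity (S i)) as DI. rewrite cf_den_SS, plus_IZR, mult_IZR in DI.
  pose proof (cf_err_pos (S i)). pose proof (cf_err_pos (S (S i))).
  destruct (cf_den_ge1 i) as [Q0 Q1].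
  assert (0 <= IZR (cf_den a i)) by (apply IZR_le; exact Q0).
  assert (1 <= IZR (cf_den a (S i))) by (apply IZR_le; exact Q1). nra.
Qed.

(* 0 <= p_{i+1} <= q_{i+1}, since |q_{i+1} a - p_{i+1}| < 1; hence the
   convergent vector of index i lies in every box of max-norm m >= q_i. *)
Lemma cf_num_bounds i : (0 <= cf_num a (S i) <= cf_den a (S i))%Z.
Proof.
  pose proof (conv_xi_abs (S i)) as E. pose proof (cf_err_le1 (S i)).
  pose proof (cf_err_decr i). pose proof (cf_err_le1 i).
  destruct (cf_den_ge1 i) as [_ Q1]. apply IZR_le in Q1.
  assert (Hlt : Rabs (xi a (conv a (S i))) < 1) by lra.
  apply Rabs_def2 in Hlt. unfold xi, conv in Hlt; cbn [fst snd] in Hlt.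
  rewrite opp_IZR in Hlt.
  assert (Lo : -1 < IZR (cf_num a (S i))) by nra.
  assert (Hi : IZR (cf_num a (S i)) < IZR (cf_den a (S i) + 1)) by (rewrite plus_IZR; nra).
  apply lt_IZR in Lo, Hi. lia.
Qed.

Lemma conv_inbox i m : (1 <= m)%nat -> (cf_den a i <= Z.of_nat m)%Z -> inbox m (conv a i).
Proof.
  intros Hm HQ. unfold inbox, conv; cbn [fst snd].
  destruct i as [|i]; [simpl; lia|].
  pose proof (cf_num_bounds i). lia.
Qed.

(* Best approximation: if 0 < |r_1| < q_{i+1} then |r_1 a + r_2| >= t_i.
   Writing w in the basis conv i, conv (S i), both coordinates and both
   values of xi have opposite signs. *)
Lemma best_approximation i (w : vec) : fst w <> 0%Z ->
  (Z.abs (fst w) < cf_den a (S i))%Z -> cf_err a i <= Rabs (xi a w).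
Proof.
  intros Hw Hlt. set (u := conv a i). set (v := conv a (S i)).
  assert (Hsign : (1 <= det2 w v /\ det2 u w <= 0 \/ det2 w v <= -1 /\ 0 <= det2 u w)%Z).
  { apply (coords_opposite_signs _ _ (fst w) (det2 u v) (cf_den a i) (cf_den a (S i)));
      [apply conv_det|exact Hw|apply cf_den_ge1|exact Hlt|].
    rewrite Z.mul_comm. apply cramer_fst. }
  assert (HsignR : 1 <= IZR (det2 w v) /\ IZR (det2 u w) <= 0 \/
                   IZR (det2 w v) <= -1 /\ 0 <= IZR (det2 u w)).
  { destruct Hsign as [[c1 c2]|[c1 c2]]; [left|right];
      (split; [apply IZR_le in c1|apply IZR_le in c2]); auto. }
  assert (Habs : Rabs (xi a w) = Rabs (IZR (det2 w v) * xi a u + IZR (det2 u w) * xi a v)).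
  { rewrite <- cramer_xi, Rabs_mult.
    replace (Rabs (IZR (det2 u v))) with 1; [ring|].
    destruct (conv_det i) as [E|E]; fold u v in E; rewrite E;
      unfold Rabs; destruct Rcase_abs; lra. }
  rewrite Habs, <- (conv_xi_abs i). apply abs_combination_lower; [apply conv_xi_opposite|exact HsignR].
Qed.

Lemma box_lower_bound i m (w : vec) : w <> (0%Z, 0%Z) -> inbox m w ->
  (Z.of_nat m < cf_den a (S i))%Z -> cf_err a i <= Rabs (xi a w).
Proof.
  intros Hw [B1 _] Hm. destruct w as [r1 r2]; cbn [fst] in B1.
  destruct (Z.eq_dec r1 0) as [->|Hr1].
  - unfold xi; cbn [fst snd]. rewrite Rmult_0_l, Rplus_0_l, <- abs_IZR.
    assert (r2 <> 0%Z) by (intro; subst; auto).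
    pose proof (cf_err_le1 i). assert (1 <= IZR (Z.abs r2)) by (apply IZR_le; lia). lra.
  - apply best_approximation; cbn [fst]; lia.
Qed.

(* For q_{j+1} <= m the second row of A_m satisfies |xi(w_2)| <= t_j: one of
   the convergent vectors of index j, j+1 is independent of w_1. *)
Lemma minkowski_second_row_upper j m (w1 w2 : vec) : IsA a m (w1, w2) -> (1 <= m)%nat ->
  (cf_den a (S j) <= Z.of_nat m)%Z -> Rabs (xi a w2) <= cf_err a j.
Proof.
  intros HA Hm Hq. destruct (minkowski_rows a m w1 w2 HA) as [Nz1 _].
  unfold IsA in HA; cbn [fst snd] in HA. destruct HA as [_ [_ [_ [_ M2]]]].
  assert (Hbasis : det2 (conv a j) (conv a (S j)) <> 0%Z)
    by (destruct (conv_det j) as [E|E]; rewrite E; discriminate).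
  pose proof (cf_den_mono j). pose proof (cf_err_decr j).
  destruct (independent_of_basis _ _ w1 Hbasis Nz1) as [D|D].
  - rewrite <- (conv_xi_abs j). apply M2; [exact D|apply conv_inbox; lia].
  - pose proof (M2 _ D (conv_inbox (S j) m Hm Hq)) as Hmin.
    rewrite conv_xi_abs in Hmin. lra.
Qed.

Lemma bounded_pq_ratio_lower M : (forall j, (1 <= j)%nat -> (cf_pq a j <= M)%Z) ->
  forall m, (1 <= m)%nat -> / (IZR M + 1) <= Rabs (alpha_1 a (Amat a m)).
Proof.
  intros HM m Hm. pose proof (pq_bound_ge1 M HM) as HM1.
  pose proof (Amat_spec a m Hm) as HA. destruct (Amat a m) as [w1 w2].
  destruct (minkowski_rows a m w1 w2 HA) as [Nz1 [Nz2 _]].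
  destruct (cf_den_bracket (Z.of_nat m)) as [[|j] [Hk [Hlo Hhi]]]; [lia|lia|].
  assert (Hlower : cf_err a (S j) <= Rabs (xi a w1)).
  { apply (box_lower_bound (S j) m w1 Nz1); [apply HA|exact Hhi]. }
  pose proof (minkowski_second_row_upper j m w1 w2 HA Hm Hlo) as Hupper.
  pose proof (cf_err_ratio M j (HM (S j) ltac:(lia))) as Hratio.
  apply alpha_1_ge_iff; [apply xi_nonzero; auto|].
  apply (Rmult_le_reg_l (IZR M + 1)); [lra|].
  rewrite <- Rmult_assoc, Rinv_r, Rmult_1_l by lra. nra.
Qed.

(* Direction (<=): if |alpha_1(A_m)| >= d for all m then a_{i+1} <= 2 / d,
   using m = q_{i+1}. *)
Lemma ratio_lower_bounded_pq d : 0 < d ->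
  (forall m, (1 <= m)%nat -> d <= Rabs (alpha_1 a (Amat a m))) ->
  forall i, IZR (cf_pq a (S i)) <= 2 / d.
Proof.
  intros Hd H i. destruct (cf_den_ge1 i) as [_ Q1].
  set (m := Z.to_nat (cf_den a (S i))).
  assert (Hmq : Z.of_nat m = cf_den a (S i)) by (unfold m; lia).
  assert (Hm : (1 <= m)%nat) by lia.
  pose proof (Amat_spec a m Hm) as HA. pose proof (H m Hm) as Hdm.
  destruct (Amat a m) as [w1 w2].
  destruct (minkowski_rows a m w1 w2 HA) as [Nz1 [Nz2 Hle]].
  unfold IsA in HA; cbn [fst snd] in HA. destruct HA as [[_ [B1 M1]] [_ [B2 [D12 _]]]].
  assert (Hw1 : Rabs (xi a w1) <= cf_err a (S i)).
  { rewrite <- conv_xi_abs. apply M1; [|apply conv_inbox; lia].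
    intro E. apply (f_equal fst) in E. unfold conv in E; cbn [fst] in E. lia. }
  pose proof (det_lower_bound a m w1 w2 D12 B1 B2 Hle) as Hdet.
  rewrite INR_IZR_INZ, Hmq in Hdet.
  apply alpha_1_ge_iff in Hdm; [|apply xi_nonzero; auto].
  pose proof (pq_den_err_le1 i) as Hpq.
  pose proof (cf_pq_ge1 i) as Hpq1. apply IZR_le in Hpq1.
  apply IZR_le in Q1. pose proof (Rabs_pos (xi a w2)).
  apply (Rmult_le_reg_l d); [exact Hd|]. unfold Rdiv.
  rewrite <- Rmult_assoc, (Rmult_comm d 2), Rmult_assoc, Rinv_r, Rmult_1_r by lra.
  set (q := IZR (cf_den a (S i))) in *. set (t := cf_err a (S i)) in *.
  (* d <= 2 q d |xi(w_2)| <= 2 q |xi(w_1)| <= 2 q t, and a_{i+1} q t <= 1 *)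
  assert (Hdt : d <= 2 * q * t) by nra.
  nra.
Qed.

End ContinuedFraction.

Theorem lemma4p2 (alpha : R) (H0 : 0 < alpha) (H1 : alpha < 1)
  (Hirr : irrational alpha) :
  (exists M : Z, forall j : nat, (1 <= j)%nat -> (cf_pq alpha j <= M)%Z) <->
  (exists delta : R, 0 < delta /\
     forall k m : nat, (1 <= k)%nat -> ChainIdx alpha k m ->
       delta <= Rabs (alpha_1 alpha (Amat alpha m))).
Proof.
  split.
  - intros [M HM]. exists (/ (IZR M + 1)). split.
    + pose proof (pq_bound_ge1 alpha H0 H1 Hirr M HM). apply Rinv_0_lt_compat. lra.
    + intros k m _ Hc. apply (bounded_pq_ratio_lower alpha H0 H1 Hirr M HM).
      apply (chain_index_ge1 _ _ _ Hc).
  - intros [d [Hd Hchain]]. exists (up (2 / d)). intros [|i] Hi; [lia|].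
    (* every A_m is a member of the chain, so the bound holds for all m *)
    assert (Hall : forall m, (1 <= m)%nat -> d <= Rabs (alpha_1 alpha (Amat alpha m))).
    { intros m Hm. destruct (chain_covers alpha m Hm) as [k [m' [Hk [Hc E]]]].
      rewrite <- E. exact (Hchain k m' Hk Hc). }
    pose proof (ratio_lower_bounded_pq alpha H0 H1 Hirr d Hd Hall i) as Hpq.
    destruct (archimed (2 / d)) as [Hup _].
    apply Z.lt_le_incl, lt_IZR. lra.
Qed.
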